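(* Fix integers $N\ge 2$ and $K\ge 1$. The classes $M^{\text{ComplEx}}_{KN}$ and $M^{\text{HolE}}_{2KN+1}$ are universal, i.e. $\pi(\mathcal{M}^{\text{ComplEx}}_{KN})=\pi(\mathcal{M}^{\text{HolE}}_{2KN+1})=\pi(\mathbb{R}^{N\times N\times K})$.
   Context: There are $N$ entities and $K$ relations. A score-based model assigns a score $s_k(i,j)\in\mathbb{R}$ to each triple, $i,j\in\{1,\dots,N\}$, $k\in\{1,\dots,K\}$; its scoring tensor $\mathcal{S}\in\mathbb{R}^{N\times N\times K}$ has frontal slices $\mathbf{S}_k$ with $[\mathbf{S}_k]_{ij}=s_k(i,j)$. For a real $N\times N$ matrix $\mathbf{S}$, $\pi(\mathbf{S})$ is the matrix of dense ranks: $\pi_{ij}(\mathbf{S})=1+$ (number of distinct values among entries of $\mathbf{S}$ strictly larger than $s_{ij}$). For tensors, $\pi$ acts slicewise; for a set $X$, $\pi(X)=\{\pi(x):x\in X\}$. ComplEx of size $r$: parameters $\mathbf{A}\in\mathbb{C}^{N\times r}$ (rows $\mathbf{a}_i$), $\mathbf{R}\in\mathbb{C}^{K\times r}$ (rows $\mathbf{r}_k$), score $\mathrm{Re}(\mathbf{a}_i^T\mathrm{diag}(\mathbf{r}_k)\overline{\mathbf{a}_j})$. HolE of size $r$: parameters $\mathbf{A}\in\mathbb{R}^{N\times r}$, $\mathbf{R}\in\mathbb{R}^{K\times r}$, score $\mathbf{r}_k^T(\mathbf{a}_i\star\mathbf{a}_j)$ where $(\mathbf{a}\star\mathbf{b})_m=\sum_{t=1}^r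 a_t\, b_{((m+t-2)\bmod r)+1}$ is circular correlation. $\mathcal{M}^t_r$ is the set of scoring tensors of all models of type $t$ and size $r$. *)

From HB Require Import structures.
From mathcomp Require Import all_boot all_order all_algebra.
From mathcomp Require Import reals.
From mathcomp.real_closed Require Import complex.
Set Implicit Arguments. Unset Strict Implicit. Unset Printing Implicit Defensive.
Import Order.TTheory GRing.Theory Num.Theory.
Local Open Scope ring_scope.

(* A scoring tensor in R^{N x N x K}: frontal slices S k, with [S k] i j = s_k(i,j). *)
Definition tensor (R : Type) (N K : nat) := 'I_K -> 'M[R]_N.

Definition dense_rank (R : realType) (N : nat) (S : 'M[R]_N) (i j : 'I_N) : nat :=
  (size (undup [seq S p.1 p.2 | p <- enum {: 'I_N * 'I_N} & S i j < S p.1 p.2])).+1.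

(* pi acting slicewise on a tensor; result is a finite function (extensional). *)
Definition pi_tensor (R : realType) (N K : nat) (S : tensor R N K)
  : {ffun 'I_K -> 'M[nat]_N} :=
  [ffun k => \matrix_(i, j) dense_rank (S k) i j].

Definition complex_scores (R : realType) (N K r : nat)
  (A : 'M[R[i]]_(N, r)) (Rel : 'M[R[i]]_(K, r)) : tensor R N K :=
  fun k => \matrix_(i, j) @complex.Re R (\sum_(t < r) A i t * Rel k t * conjc (A j t)).

(* Circular correlation with 0-based indices: (a * b)_m = sum_t a_t b_{(m+t) mod r}
   (equivalent to the 1-based formula b_{((m+t-2) mod r)+1}). *)
Definition circ_corr (R : realType) (r : nat) (a b : 'rV[R]_r) (m : 'I_r) : R :=
  \sum_(t < r) a 0 t * b 0 (Ordinal (ltn_pmod (m + t) (leq_ltn_trans (leq0n m) (ltn_ord m)))).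

Definition hole_scores (R : realType) (N K r : nat)
  (A : 'M[R]_(N, r)) (Rel : 'M[R]_(K, r)) : tensor R N K :=
  fun k => \matrix_(i, j) \sum_(m < r) Rel k m * circ_corr (row i A) (row j A) m.

Definition complex_universal_size (R : realType) (N K r : nat) : Prop :=
  forall P : {ffun 'I_K -> 'M[nat]_N},
    (exists (A : 'M[R[i]]_(N, r)) (Rel : 'M[R[i]]_(K, r)),
        pi_tensor (complex_scores A Rel) = P) <->
    (exists S : tensor R N K, pi_tensor S = P).

Definition hole_universal_size (R : realType) (N K r : nat) : Prop :=
  forall P : {ffun 'I_K -> 'M[nat]_N},
    (exists (A : 'M[R]_(N, r)) (Rel : 'M[R]_(K, r)),
        pi_tensor (hole_scores A Rel) = P) <->
    (exists S : tensor R N K, pi_tensor S = P).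

From HB Require Import structures.
From mathcomp Require Import all_boot all_order all_algebra.
From mathcomp Require Import reals.
From mathcomp.real_closed Require Import complex.
From mathcomp Require Import cyclic separable cyclotomic.
From mathcomp Require Import ring zify.
Set Implicit Arguments. Unset Strict Implicit. Unset Printing Implicit Defensive.
Import Order.TTheory GRing.Theory Num.Theory.
Local Open Scope ring_scope.

(* Both models realise every real tensor exactly, so they produce every rank
   pattern.

   ComplEx: for a real matrix X, the matrix Z = X + i X^T is normal, hence
   Z = P^* D P with P unitary, and X = Re Z is a ComplEx slice whose entity
   embeddings are the columns of P^*.  The K slices are placed on disjoint
   blocks of K N coordinates.

   HolE: let w be a primitive r-th root of unity, r = 2m + 1.  A real vector of
   length r whose discrete Fourier coefficients are supported on the
   frequencies +-1, ..., +-m and are conjugate-symmetric is determined by m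
   complex numbers.  By the orthogonality of the characters t |-> w^(a t),
   circular correlation of such vectors becomes a product of their
   coefficients, so a HolE model of size 2m + 1 reproduces any ComplEx model
   of size m. *)

Section RankPatterns.
Variables (R : realType) (N K : nat) (T1 T2 : Type) (f : T1 -> T2 -> tensor R N K).
Hypothesis f_onto : forall S : tensor R N K, exists x y, f x y =1 S.

Lemma rank_patterns_of_onto (P : {ffun 'I_K -> 'M[nat]_N}) :
  (exists x y, pi_tensor (f x y) = P) <-> (exists S : tensor R N K, pi_tensor S = P).
Proof.
split=> [[x [y <-]] | [S <-]]; first by exists (f x y).
have [x [y fxyS]] := f_onto S.
by exists x, y; apply/ffunP => k; rewrite !ffunE fxyS.
Qed.

End RankPatterns.

Lemma normalmx_spectral_entry (C : numClosedFieldType) N (M : 'M[C]_N) (i j : 'I_N) :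
  M \is normalmx ->
  M i j = \sum_(n < N) (spectralmx M n i)^* * spectral_diag M 0 n * spectralmx M n j.
Proof.
move=> /orthomx_spectralP {1}->.
rewrite invmx_unitary ?spectral_unitarymx // mul_mx_diag mxE.
by apply: eq_bigr => n _; rewrite !mxE.
Qed.

Lemma sum_mxvec_index (V : nmodType) m n (F : 'I_(m * n) -> V) :
  \sum_(t < m * n) F t = \sum_(a < m) \sum_(b < n) F (mxvec_index a b).
Proof.
rewrite (reindex (uncurry (@mxvec_index m n))) /=; last exact: curry_mxvec_bij.
by rewrite pair_big /=; apply: eq_bigr => -[a b].
Qed.

Section NormalLift.
Variable R : rcfType.
Local Notation C := R[i].
Local Notation "x %:C" := (real_complex R x).

Definition normal_lift N (X : 'M[R]_N) : 'M[C]_N :=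
  \matrix_(i, j) ((X i j)%:C + 'i%C * (X j i)%:C).

Lemma normal_lift_normal N (X : 'M[R]_N) : normal_lift X \is normalmx.
Proof.
have swap (a b c d : C) : (a + 'i%C * b) * (c - 'i%C * d) = (b - 'i%C * a) * (d + 'i%C * c).
  apply/eqP; rewrite -subr_eq0.
  have -> : (a + 'i%C * b) * (c - 'i%C * d) - (b - 'i%C * a) * (d + 'i%C * c) =
            ('i%C ^+ 2 + 1) * (a * c - b * d) by ring.
  by rewrite sqr_i addNr mul0r.
have conjR (x : R) : (x%:C)^* = x%:C := conjc_real x.
apply/normalmxP/matrixP => i j; rewrite !mxE; apply: eq_bigr => l _.
by rewrite !mxE !rmorphD !rmorphM /= !conjR conjCi !mulNr swap.
Qed.

Lemma Re_normal_lift N (X : 'M[R]_N) (i j : 'I_N) : complex.Re (normal_lift X i j) = X i j.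
Proof. by rewrite mxE /= mul0r mul1r subrr addr0. Qed.

End NormalLift.

Lemma complex_scores_onto (R : realType) N K (S : tensor R N K) :
  exists (A : 'M[R[i]]_(N, K * N)) (Rel : 'M[R[i]]_(K, K * N)),
    complex_scores A Rel =1 S.
Proof.
pose P k := spectralmx (normal_lift (S k)).
pose d k := spectral_diag (normal_lift (S k)).
(* Slice k lives on the block of coordinates mxvec_index k _. *)
exists (\matrix_(i, t) mxvec (\matrix_(k, n) (P k n i)^*) 0 t).
exists (\matrix_(k, t) mxvec (\matrix_(k', n) (if k' == k then d k 0 n else 0)) 0 t).
move=> k; apply/matrixP => i j; rewrite mxE -[RHS](Re_normal_lift (S k) i j).
rewrite (normalmx_spectral_entry _ _ (normal_lift_normal _)).
congr complex.Re; rewrite sum_mxvec_index (bigD1 k) //= [X in _ + X]big1 ?addr0.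
  by apply: eq_bigr => n _; rewrite !mxE !mxvecE !mxE eqxx [conjc _]conjCK.
move=> k' nk; apply: big1 => n _.
by rewrite !mxE !mxvecE !mxE (negbTE nk) mulr0 mul0r.
Qed.

Lemma closed_prim_root_exists (C : numClosedFieldType) n : (0 < n)%N ->
  exists z : C, n.-primitive_root z.
Proof.
move=> n_gt0; have [r Dp] := closed_field_poly_normal ('X^n - 1 : {poly C}).
rewrite (monicP _) ?monicXnsubC // scale1r in Dp.
have rn1 : all n.-unity_root r by apply/allP=> z; rewrite -root_prod_XsubC -Dp.
have sz_r : (n < (size r).+1)%N by rewrite -(size_prod_XsubC r id) -Dp size_XnsubC.
have [|z] := hasP (has_prim_root n_gt0 rn1 _ sz_r); last by exists z.
by rewrite -separable_prod_XsubC -Dp separable_Xn_sub_1 // pnatr_eq0 -lt0n.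
Qed.

Section PrimRoot.
Variables (C : numClosedFieldType) (r : nat) (w : C).
Hypothesis w_prim : r.-primitive_root w.

Let r_gt0 : (0 < r)%N := prim_order_gt0 w_prim.

Let w_neq0 : w != 0.
Proof. by rewrite (prim_root_eq0 w_prim) -lt0n. Qed.

Lemma prim_expz_addM (a q : int) : w ^ (a + q * r%:Z) = w ^ a.
Proof.
by rewrite expfzDr // [q * _]mulrC -exprz_exp -exprnP prim_expr_order // exp1rz mulr1.
Qed.

Lemma norm_prim_root : `|w| = 1.
Proof.
apply/eqP; rewrite -(pexpr_eq1 r_gt0) // -normrX prim_expr_order //.
by rewrite normr1.
Qed.

Lemma conj_prim_expz (a : int) : (w ^ a)^* = w ^ (- a).
Proof.
have conj_w : w^* = w^-1.
  by apply: (mulfI w_neq0); rewrite divff // -normCK norm_prim_root expr1n.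
by rewrite fmorphXz /= conj_w exprz_inv.
Qed.

Lemma prim_expz_eq1 (a : int) : `|a| < r%:Z -> (w ^ a == 1) = (a == 0).
Proof.
case: a => n; last first.
  by rewrite NegzE -exprnN invr_eq1 -(prim_order_dvd w_prim) => /gtnNdvd->.
rewrite -exprnP -(prim_order_dvd w_prim) /=.
by case: n => [|n] lt_nr; [rewrite dvdn0 | rewrite gtnNdvd].
Qed.

Lemma sum_prim_expz (a : int) : `|a| < r%:Z ->
  \sum_(t < r) w ^ (a * t%:Z) = if a == 0 then r%:R else 0.
Proof.
move=> lt_ar; case: eqP => [-> | /eqP a_neq0].
  by rewrite (eq_bigr (fun _ => 1)) ?sumr_const ?card_ord // => t _; rewrite mul0r.
have wa_neq1 : w ^ a != 1 by rewrite prim_expz_eq1.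
(* Geometric sum: (w^a - 1) * \sum_t (w^a)^t = (w^a)^r - 1 = 0. *)
have : (w ^ a - 1) * \sum_(t < r) w ^ (a * t%:Z) = 0.
  under eq_bigr do rewrite -exprz_exp -exprnP.
  by rewrite -subrX1 exprnP exprz_exp -[a * _]add0r prim_expz_addM subrr.
by move/eqP; rewrite mulf_eq0 subr_eq0 (negbTE wa_neq1) => /eqP.
Qed.

End PrimRoot.

Definition freq m (u : 'I_m * bool) : int :=
  if u.2 then (u.1.+1)%:Z else - (u.1.+1)%:Z.

Definition opp_freq m (u : 'I_m * bool) : 'I_m * bool := (u.1, ~~ u.2).

Lemma norm_freqD_lt m (u v : 'I_m * bool) : `|freq u + freq v| < (2 * m + 1)%N%:Z.
Proof.
case: u v => [f []] [g []]; rewrite /freq /=; have := ltn_ord f; have := ltn_ord g; lia.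
Qed.

Lemma freqD_eq0 m (u v : 'I_m * bool) : (freq u + freq v == 0) = (u == opp_freq v).
Proof.
case: u v => [f []] [g []]; rewrite /freq /opp_freq xpair_eqE /= ?andbT ?andbF -?val_eqE /=; lia.
Qed.

Lemma sum_prod_bool (V : nmodType) m (F : 'I_m * bool -> V) :
  \sum_u F u = \sum_(f < m) (F (f, true) + F (f, false)).
Proof.
transitivity (\sum_f \sum_(s : bool) F (f, s)); last by apply: eq_bigr => f _; rewrite big_bool.
by rewrite pair_bigA; apply: eq_bigr => -[].
Qed.

Section Fourier.
Variables (C : numClosedFieldType) (m r : nat) (w : C).
Hypotheses (w_prim : r.-primitive_root w) (r_def : r = (2 * m + 1)%N).
Local Notation U := ('I_m * bool)%type.

Let w_neq0 : w != 0.
Proof. by rewrite (prim_root_eq0 w_prim) r_def addn1. Qed.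

Definition fourier (F : U -> C) (n : nat) : C := \sum_u F u * w ^ (freq u * n%:Z).

Lemma fourier_mod F n : fourier F (n %% r) = fourier F n.
Proof.
apply: eq_bigr => u _; rewrite {2}(divn_eq n r) PoszD PoszM mulrDr addrC mulrA.
by rewrite (prim_expz_addM w_prim).
Qed.

Lemma fourier_addn F d t :
  fourier F (d + t) = fourier (fun u => F u * w ^ (freq u * d%:Z)) t.
Proof. by apply: eq_bigr => u _; rewrite PoszD mulrDr expfzDr // mulrA. Qed.

Lemma sum_fourier_mul F G :
  \sum_(t < r) fourier F t * fourier G t = r%:R * \sum_v F (opp_freq v) * G v.
Proof.
have inner (u v : U) : \sum_(t < r) w ^ ((freq u + freq v) * t%:Z) =
                 if u == opp_freq v then r%:R else 0.
  by rewrite (sum_prim_expz w_prim) ?freqD_eq0 // r_def norm_freqD_lt.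
have expand t : fourier F t * fourier G t =
    \sum_u \sum_v F u * G v * w ^ ((freq u + freq v) * t%:Z).
  rewrite mulr_suml; apply: eq_bigr => u _; rewrite mulr_sumr; apply: eq_bigr => v _.
  by rewrite mulrDl expfzDr //; ring.
under eq_bigr => t _ do rewrite expand.
rewrite exchange_big; under eq_bigr => u _ do rewrite exchange_big.
rewrite exchange_big mulr_sumr; apply: eq_bigr => v _.
under eq_bigr => u _ do rewrite -mulr_sumr inner.
rewrite (bigD1 (opp_freq v)) //= big1 => [|u /negbTE u_neq]; last by rewrite u_neq mulr0.
by rewrite eqxx addr0 mulrC.
Qed.

End Fourier.

Section HolEFromComplEx.
Variables (R : realType) (m r : nat) (w : R[i]).
Hypotheses (w_prim : r.-primitive_root w) (r_def : r = (2 * m + 1)%N).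
Local Notation C := R[i].
Local Notation "x %:C" := (real_complex R x).
Local Notation U := ('I_m * bool)%type.

Definition herm_ext (c : 'I_m -> C) (u : U) : C :=
  if u.2 then c u.1 else (c u.1)^*.

Definition real_idft (c : 'I_m -> C) (n : nat) : R :=
  \sum_(f < m) 2 * complex.Re (c f * w ^ (freq (f, true) * n%:Z)).

Lemma real_idftE c n : (real_idft c n)%:C = fourier w (herm_ext c) n.
Proof.
have conjc_expz (a : int) : (w ^ a)^*%C = w ^ (- a) := conj_prim_expz w_prim a.
rewrite rmorph_sum /fourier sum_prod_bool; apply: eq_bigr => f _.
rewrite rmorphM /= rmorph_nat ReJ_add.
rewrite [2%:R * _]mulrC divfK ?pnatr_eq0 //.
by rewrite rmorphM /= conjc_expz /freq /= mulNr.
Qed.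

Lemma circ_corr_fourier (x y : 'rV[R]_r) (F G : U -> C) :
    (forall t : 'I_r, (x 0 t)%:C = fourier w F t) ->
    (forall t : 'I_r, (y 0 t)%:C = fourier w G t) ->
  forall d : 'I_r, (circ_corr x y d)%:C = r%:R * fourier w (fun v => F (opp_freq v) * G v) d.
Proof.
move=> xE yE d.
transitivity (r%:R * \sum_v F (opp_freq v) * (G v * w ^ (freq v * d%:Z))).
  rewrite -(sum_fourier_mul w_prim r_def) rmorph_sum; apply: eq_bigr => t _.
  by rewrite rmorphM /= xE yE /= (fourier_mod w_prim) (fourier_addn w_prim r_def).
by congr (_ * _); apply: eq_bigr => v _; rewrite mulrA.
Qed.

Lemma hole_scores_fourier N K (A : 'M[R]_(N, r)) (Rel : 'M[R]_(K, r))
    (Fa : 'I_N -> U -> C) (Fr : 'I_K -> U -> C) :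
    (forall i t, (A i t)%:C = fourier w (Fa i) t) ->
    (forall k t, (Rel k t)%:C = fourier w (Fr k) t) ->
  forall k i j, (hole_scores A Rel k i j)%:C =
    r%:R ^+ 2 * \sum_v Fr k (opp_freq v) * (Fa i (opp_freq v) * Fa j v).
Proof.
move=> AE RelE k i j; rewrite mxE rmorph_sum.
transitivity (r%:R * \sum_(d < r) fourier w (Fr k) d *
                      fourier w (fun v => Fa i (opp_freq v) * Fa j v) d).
  rewrite mulr_sumr; apply: eq_bigr => d _.
  rewrite rmorphM /= RelE (circ_corr_fourier (F := Fa i) (G := Fa j)) => [|t|t].
  - exact: mulrCA.
  - by rewrite mxE AE.
  - by rewrite mxE AE.
by rewrite (sum_fourier_mul w_prim r_def) expr2 -mulrA.
Qed.

Lemma sum_herm_ext (g a b : 'I_m -> C) :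
  \sum_v herm_ext g (opp_freq v) * (herm_ext a (opp_freq v) * herm_ext b v) =
  \sum_f a f * g f * (b f)^* + (\sum_f a f * g f * (b f)^*)^*.
Proof.
rewrite sum_prod_bool rmorph_sum -big_split; apply: eq_bigr => f _.
rewrite /herm_ext /= !rmorphM /= conjCK.
by rewrite addrC [g f * _]mulrCA [(g f)^* * _]mulrCA !mulrA.
Qed.

Lemma hole_scores_of_complex N K (A' : 'M[C]_(N, m)) (B : 'M[C]_(K, m)) :
  exists (A : 'M[R]_(N, r)) (Rel : 'M[R]_(K, r)), hole_scores A Rel =1 complex_scores A' B.
Proof.
(* One factor r comes from each orthogonality relation, and 2 from the pair of
   frequencies +-(f+1), which together contribute z + z^*. *)
pose c : C := (2 * r ^ 2)%:R.
exists (\matrix_(i, t) real_idft (A' i) t).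
exists (\matrix_(k, t) real_idft (fun f => B k f / c) t).
move=> k; apply/matrixP => i j; apply: complexI.
rewrite (hole_scores_fourier (Fa := fun i => herm_ext (A' i))
                             (Fr := fun k => herm_ext (fun f => B k f / c))); last 2 first.
- by move=> i' t; rewrite mxE real_idftE.
- by move=> k' t; rewrite mxE real_idftE.
rewrite sum_herm_ext mxE ReJ_add.
have -> : \sum_f A' i f * (B k f / c) * (A' j f)^* = (\sum_f A' i f * B k f * (A' j f)^*) / c.
  by rewrite mulr_suml; apply: eq_bigr => f _; rewrite !mulrA mulrAC.
set z := \sum_f A' i f * B k f * (A' j f)^*.
rewrite -[RHS]/((z + z^*) / 2) rmorphM fmorphV rmorph_nat /c natrM natrX.
have r_neq0 : r%:R != 0 :> C by rewrite pnatr_eq0 r_def addn1.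
by field; rewrite r_neq0.
Qed.

End HolEFromComplEx.

Lemma hole_scores_onto (R : realType) N K (S : tensor R N K) :
  exists (A : 'M[R]_(N, 2 * K * N + 1)) (Rel : 'M[R]_(K, 2 * K * N + 1)),
    hole_scores A Rel =1 S.
Proof.
have [A' [B A'B_S]] := complex_scores_onto S.
have [w w_prim] : exists w : R[i], (2 * K * N + 1).-primitive_root w.
  by apply: closed_prim_root_exists; rewrite addn1.
have r_def : (2 * K * N + 1 = 2 * (K * N) + 1)%N by rewrite mulnA.
have [A [Rel AB_A'B]] := hole_scores_of_complex w_prim r_def A' B.
by exists A, Rel => k; rewrite AB_A'B A'B_S.
Qed.

Theorem theorem7 (R : realType) (N K : nat) (hN : (2 <= N)%N) (hK : (1 <= K)%N) :
  complex_universal_size R N K (K * N) /\ hole_universal_size R N K (2 * K * N + 1).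
Proof.
split; apply: rank_patterns_of_onto; [exact: complex_scores_onto | exact: hole_scores_onto].
Qed.
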